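(* Let $H$ be the group defined below (with sets $A_\alpha=\{n\in\omega:\eta_\alpha(n)=1\}$), let $0\to T\to G\xrightarrow{\varphi}H\to 0$ be a balanced exact sequence with $T$ a torsion group (viewed as a subgroup of $G$), and fix elements $g_\alpha\in G$ with $\varphi(g_\alpha)=y_\alpha$ ($\alpha<\kappa$) and $\tilde x_n\in G$ with $\varphi(\tilde x_n)=x_n$ ($n\in\omega$). For $\alpha<\kappa$ and $t\in T$ let $R_{\alpha,t}=\{n\in A_\alpha : g_\alpha-t-\tilde x_n \text{ is not divisible by } p_n \text{ in } G\}$. Let $\alpha<\kappa$ and $t\in T$ be such that $R_{\alpha,t}$ is finite. Then there exists $t_\alpha\in T$ such that $R_{\alpha,t_\alpha}=\emptyset$.
   Context: All groups are abelian. A pure subgroup $A$ of a torsion-free group $G$ is balanced if every coset $g+A$ contains an element $g+a$ ($a\in A$) whose characteristic is $\geq$ that of $g+x$ for all $x\in A$; an exact sequence $0\to A\to G\to C\to0$ is balanced exact if the image of $A$ is balanced in $G$. Setting: $\kappa$ is an uncountable cardinal, $\eta_\alpha:\omega\to 2$ ($\alpha<\kappa$) are the Cohen reals added by the forcing of finite partial functions $\kappa\times\omega\to 2$ (the lemma is considered in the generic extension). Fix primes $p_0<p_1<\cdots$; let $W=\bigoplus_{n\in\omega}\mathbb{Q}x_n\oplus\bigoplus_{\alpha<\kappa}\mathbb{Q}y_\alpha$ on independent elements, $F=\bigoplus_n\mathbb{Z}x_n\oplus\bigoplus_{\alpha<\kappa}\mathbb{Z}y_\alpha$, and $H$ the subgroup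 of $W$ generated by $F$ and all $p_n^{-1}(y_\alpha-x_n)$ with $\eta_\alpha(n)=1$. *)

From HB Require Import structures.
From mathcomp Require Import all_boot all_order all_algebra.
Set Implicit Arguments. Unset Strict Implicit. Unset Printing Implicit Defensive.
Import Order.TTheory GRing.Theory Num.Theory.
Local Open Scope ring_scope.

(* The Q-vector space W = (+)_n Q x_n (+) (+)_{alpha in K} Q y_alpha, modelled as
   rational-valued functions on the index set nat + K (coordinates w.r.t. the
   independent family x_n, y_alpha); only finitely supported functions arise in H. *)
Definition W (K : Type) := (nat + K)%type -> rat.

Definition xv (K : Type) (n : nat) : W K :=
  fun i => match i with inl m => (m == n)%:R | inr _ => 0 end.
Definition yv (K : eqType) (a : K) : W K :=
  fun i => match i with inl _ => 0 | inr b => (b == a)%:R end.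

Inductive inH (K : eqType) (p : nat -> nat) (eta : K -> nat -> bool) : W K -> Prop :=
| inH0 : inH p eta (fun _ => 0)
| inHx n : inH p eta (@xv K n)
| inHy a : inH p eta (yv a)
| inHgen n a : eta a n -> inH p eta (fun i => (yv a i - @xv K n i) / (p n)%:R)
| inHsub u v : inH p eta u -> inH p eta v -> inH p eta (fun i => u i - v i).

Definition divisible_by (G : zmodType) (m : nat) (g : G) : Prop :=
  exists z : G, g = z *+ m.

Definition char_ge (G : zmodType) (a b : G) : Prop :=
  forall q k : nat, prime q -> divisible_by (q ^ k) b -> divisible_by (q ^ k) a.

Definition pure_subgroup (G : zmodType) (A : G -> Prop) : Prop :=
  forall (a : G) (m : nat), A a -> divisible_by m a ->
    exists z : G, A z /\ a = z *+ m.

Definition balanced (G : zmodType) (A : G -> Prop) : Prop :=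
  pure_subgroup A /\
  forall g : G, exists a : G, A a /\ forall x : G, A x -> char_ge (g + a) (g + x).

Definition Rset (K : Type) (G : zmodType) (p : nat -> nat) (eta : K -> nat -> bool)
  (g : K -> G) (xt : nat -> G) (a : K) (t : G) (n : nat) : Prop :=
  eta a n /\ ~ divisible_by (p n) (g a - t - xt n).

From mathcomp Require Import all_boot all_order all_algebra.
From Stdlib Require Import FunctionalExtensionality.
Set Implicit Arguments. Unset Strict Implicit. Unset Printing Implicit Defensive.
Import Order.TTheory GRing.Theory Num.Theory.
Local Open Scope ring_scope.

(* Induct on a bound N for R_{a,t}.  If eta_a(N) holds, lift p_N^{-1}(y_a - x_N)
   to some h in G; then s = g_a - t - x~_N - p_N h lies in the torsion group T.
   Write s = e + z with e the p_N-primary component of s and z killed by a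
   number prime to p_N.  Replacing t by t + e makes g_a - t - x~_N = z + p_N h
   divisible by p_N, and changes each g_a - t - x~_n (n <> N) only by the
   p_N-primary element e, which is divisible by p_n. *)

Section Divisibility.
Variable G : zmodType.
Implicit Types (x y : G) (q m : nat).

Lemma divisible_byD q x y :
  divisible_by q x -> divisible_by q y -> divisible_by q (x + y).
Proof. by move=> [u ->] [v ->]; exists (u + v); rewrite mulrnDl. Qed.

Lemma divisible_byN q x : divisible_by q x -> divisible_by q (- x).
Proof. by move=> [u ->]; exists (- u); rewrite mulNrn. Qed.

Lemma divisible_byB q x y :
  divisible_by q x -> divisible_by q y -> divisible_by q (x - y).
Proof. by move=> dx /divisible_byN; apply: divisible_byD. Qed.

Lemma subrDAC x y z w : x - (y + z) - w = x - y - w - z.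
Proof. by rewrite opprD addrA (addrAC _ (- z)). Qed.

Lemma coprime_torsion_divisible q m x :
  coprime q m -> x *+ m = 0 -> divisible_by q x.
Proof.
case: m => [|m]; first by rewrite /coprime gcdn0 => /eqP ->; exists x.
move=> qm xm; have [u _] := Bezoutl q (ltn0Sn m).
rewrite gcdnC (eqP qm) => /dvdnP[v uq].
have : x *+ (1 + u * q) = 0 by rewrite uq mulnC mulrnA xm mul0rn.
rewrite mulrnDr mulr1n => /eqP; rewrite addr_eq0 => /eqP ->.
by apply: divisible_byN; exists (x *+ u); rewrite -mulrnA.
Qed.

(* The Bezout relation 1 + u B = v A gives x = x *+ (v A) - x *+ (u B). *)
Lemma torsion_coprime_split A B x : (0 < A)%N -> coprime A B ->
  x *+ (A * B) = 0 -> exists j, (x - x *+ j) *+ A = 0 /\ x *+ j *+ B = 0.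
Proof.
move=> A_gt0 coAB xAB; have [u _] := Bezoutl B A_gt0.
rewrite (eqP coAB) => /dvdnP[v uv]; exists (v * A)%N; split.
- have -> : x - x *+ (v * A) = - x *+ (u * B).
    by rewrite -uv mulrnDr mulr1n opprD addNKr mulNrn.
  by rewrite -mulrnA mulnC mulnCA mulnC mulrnA mulNrn xAB oppr0 mul0rn.
- by rewrite -mulrnA -mulnA mulnC mulrnA xAB mul0rn.
Qed.

End Divisibility.

Section Subgroup.
Variables (G : zmodType) (S : G -> Prop).
Hypotheses (S0 : S 0) (SB : forall u v, S u -> S v -> S (u - v)).

Lemma subgroupN u : S u -> S (- u).
Proof. by move=> Su; rewrite -sub0r; apply: SB. Qed.

Lemma subgroupD u v : S u -> S v -> S (u + v).
Proof. by move=> Su /subgroupN Sv; rewrite -(opprK v); apply: SB. Qed.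

Lemma subgroupMn u n : S u -> S (u *+ n).
Proof.
by move=> Su; elim: n => [|n IHn]; rewrite ?mulr0n // mulrS; apply: subgroupD.
Qed.

End Subgroup.

Section PointwiseAdditive.
Variables (G : zmodType) (I : Type) (V : zmodType) (f : G -> I -> V).
Hypothesis f_add : forall u v, f (u + v) = (fun i => f u i + f v i).

Lemma pointwise_additiveB u v i : f (u - v) i = f u i - f v i.
Proof.
by have := congr1 (fun h => h i) (f_add (u - v) v); rewrite subrK => ->; rewrite addrK.
Qed.

Lemma pointwise_additiveMn u n i : f (u *+ n) i = f u i *+ n.
Proof.
elim: n => [|n IHn]; last by rewrite !mulrS f_add IHn.
by rewrite !mulr0n -(subrr u) pointwise_additiveB !subrr.
Qed.

End PointwiseAdditive.

Section CorrectingTheTorsionPart.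
Variables (K : eqType) (p : nat -> nat) (eta : K -> nat -> bool).
Variables (G : zmodType) (T : G -> Prop) (phi : G -> W K).
Variables (g : K -> G) (xt : nat -> G) (a : K).
Hypotheses (p_prime : forall n, prime (p n)) (p_inj : injective p).
Hypotheses (T0 : T 0) (Tsub : forall u v, T u -> T v -> T (u - v))
  (T_torsion : forall u, T u -> exists m : nat, (0 < m)%N /\ u *+ m = 0).
Hypotheses (phi_add : forall u v, phi (u + v) = (fun i => phi u i + phi v i))
  (phi_onto : forall h, inH p eta h -> exists u, phi u = h)
  (phi_ker : forall u, phi u = (fun _ => 0) <-> T u).
Hypotheses (hg : forall a, phi (g a) = yv a) (hxt : forall n, phi (xt n) = @xv K n).

Local Notation R := (Rset p eta g xt a).

Lemma primary_correction t N : T t -> eta a N ->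
  exists e k, [/\ T e, e *+ (p N ^ k) = 0 &
                  divisible_by (p N) (g a - (t + e) - xt N)].
Proof.
move=> Tt etaN; have [h hh] := phi_onto (inHgen p etaN).
set s := g a - t - xt N - h *+ p N.
have Ts : T s.
  apply/phi_ker/functional_extensionality => i.
  rewrite /s !(pointwise_additiveB phi_add) (pointwise_additiveMn phi_add).
  rewrite hh hg hxt (proj2 (phi_ker t) Tt) -(mulr_natr (_ / _)) divfK.
    by rewrite subr0 subrr.
  by rewrite pnatr_eq0 -lt0n prime_gt0.
have [m [m_gt0 sm]] := T_torsion Ts.
have := torsion_coprime_split (x := s) (part_gt0 (p N) m) (coprime_partC _ m m).
rewrite partnC // => /(_ sm)[j [e_p z_p']].
exists (s - s *+ j), (logn (p N) m); split.
- by apply: Tsub => //; apply: subgroupMn.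
- by rewrite -p_part.
rewrite subrDAC; have -> : g a - t - xt N - (s - s *+ j) = s *+ j + h *+ p N.
  have -> : g a - t - xt N = s + h *+ p N by rewrite subrK.
  by rewrite opprB addrC addrA subrK.
apply: divisible_byD; last by exists h.
apply: coprime_torsion_divisible z_p'.
exact: pnat_coprime (pnat_id (p_prime N)) (part_pnat _ _).
Qed.

Lemma Rset_add_primary t e N k n :
  e *+ (p N ^ k) = 0 -> n != N -> R (t + e) n -> R t n.
Proof.
move=> ek nN [etan ndiv]; split=> // tdiv; apply: ndiv.
rewrite subrDAC; apply: divisible_byB => //.
apply: coprime_torsion_divisible ek; apply: coprimeXr.
by rewrite prime_coprime // dvdn_prime2 // (inj_eq p_inj).
Qed.

Lemma Rset_bound_step t N : T t -> (forall n, R t n -> (n < N.+1)%N) ->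
  exists t', T t' /\ forall n, R t' n -> (n < N)%N.
Proof.
move=> Tt bound; have [etaN | netaN] := boolP (eta a N).
  have [e [k [Te ek divN]]] := primary_correction Tt etaN.
  exists (t + e); split=> [|n Rn]; first exact: subgroupD.
  have nN : n != N by apply: contraPneq Rn => ->; case.
  by rewrite ltn_neqAle nN -ltnS; apply/bound/(Rset_add_primary ek nN).
exists t; split=> // n Rn.
have nN : n != N by apply: contraNneq netaN => <-; case: Rn.
by rewrite ltn_neqAle nN -ltnS; apply: bound.
Qed.

Lemma Rset_empty_of_bounded t N : T t -> (forall n, R t n -> (n < N)%N) ->
  exists t', T t' /\ forall n, ~ R t' n.
Proof.
elim: N t => [|N IHN] t Tt bound; first by exists t; split=> // n /bound.
by have [t' [Tt' bound']] := Rset_bound_step Tt bound; apply: IHN bound'.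
Qed.

End CorrectingTheTorsionPart.

Theorem lemma4p5
  (K : eqType)
  (K_uncountable : ~ exists f : K -> nat, injective f)
  (p : nat -> nat) (p_prime : forall n, prime (p n))
  (p_incr : forall n, (p n < p n.+1)%N)
  (eta : K -> nat -> bool)
  (G : zmodType) (T : G -> Prop)
  (T0 : T 0) (Tsub : forall u v, T u -> T v -> T (u - v))
  (T_torsion : forall u, T u -> exists m : nat, (0 < m)%N /\ u *+ m = 0)
  (phi : G -> W K)
  (phi_add : forall u v, phi (u + v) = (fun i => phi u i + phi v i))
  (phi_into : forall u, inH p eta (phi u))
  (phi_onto : forall h, inH p eta h -> exists u, phi u = h)
  (phi_ker : forall u, phi u = (fun _ => 0) <-> T u)
  (T_balanced : balanced T)
  (g : K -> G) (hg : forall a, phi (g a) = yv a)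
  (xt : nat -> G) (hxt : forall n, phi (xt n) = @xv K n)
  (a : K) (t : G) (ht : T t)
  (R_finite : exists N : nat, forall n, Rset p eta g xt a t n -> (n < N)%N) :
  exists ta : G, T ta /\ forall n, ~ Rset p eta g xt a ta n.
Proof.
have p_inj : injective p by move: (homo_ltn ltn_trans p_incr) => /le_mono/incn_inj.
have [N bound] := R_finite.
exact: (Rset_empty_of_bounded p_prime p_inj T0 Tsub T_torsion phi_add phi_onto
  phi_ker hg hxt ht bound).
Qed.
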